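(* Let $\Omega\subset\mathbb{R}^n$ be a bounded domain and take $\omega=\Omega$. Let $m\ge 2$ and $k\ge 1$ be integers, and let $y_0\in L^2(\Omega)$ with $y_0\notin\mathcal{S}_m$. Then Problem $(\mathcal{P})$ (for these $\Omega,\omega=\Omega,k,m,y_0$) does not have optimal controls if and only if $k<m$ and $$\big(\langle y_0,\xi_{k+1}\rangle,\langle y_0,\xi_{k+2}\rangle,\dots,\langle y_0,\xi_m\rangle\big)^T\neq 0 .$$
   Context: Let $\Omega\subset\mathbb{R}^n$ be a bounded domain and $\omega\subset\Omega$ a nonempty open set with characteristic function $\chi_\omega$. Let $\{\xi_i\}_{i\ge1}$ be an orthonormal basis of $L^2(\Omega)$ consisting of eigenfunctions of $-\Delta$ with homogeneous Dirichlet boundary condition, with eigenvalues $0<\lambda_1<\lambda_2\le\lambda_3\le\cdots\to+\infty$; $\langle\cdot,\cdot\rangle$ is the $L^2(\Omega)$ inner product. For $u$ and $y_0\in L^2(\Omega)$, $y(\cdot;u,y_0):\mathbb{R}^+\to L^2(\Omega)$ denotes the solution of $\partial_t y-\Delta y=\chi_\omega u$ in $\Omega\times\mathbb{R}^+$, $y=0$ on $\partial\Omega\times\mathbb{R}^+$, $y(\cdot,0)=y_0$. For a fixed integer $m\ge2$, the target set is $\mathcal{S}_m=\mathrm{span}\{\xi_{m+1},\xi_{m+2},\dots\}$ (the closed linear span, i.e. the set of $y\in L^2(\Omega)$ with $\langle y,\xi_i\rangle=0$ for $i=1,\dots,m$). For an integer $k\ge1$ and positive numbers $\bar a_1,\dots,\bar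 a_k$, the control constraint set is $\mathcal{U}_{\{\bar a_i\}_{i=1}^k}=\{\sum_{i=1}^k\alpha_i(\cdot)\xi_i:\ \text{each }\alpha_i \text{ is measurable from }\mathbb{R}^+\text{ to }[-\bar a_i,\bar a_i]\}$. Problem $(\mathcal{P})$ with $\{\bar a_i\}_{i=1}^k$ is: $\inf\{t\ge0: y(t;u,y_0)\in\mathcal{S}_m\}$ over $u\in\mathcal{U}_{\{\bar a_i\}_{i=1}^k}$; an optimal control is an admissible $u^*$ with $y(t^*;u^*,y_0)\in\mathcal{S}_m$ where $t^*$ is this infimum (the optimal time). For fixed $\Omega,\omega,k,y_0\notin\mathcal{S}_m$, one says ''Problem $(\mathcal{P})$ has optimal controls'' if for every finite sequence of positive numbers $\{\bar a_i\}_{i=1}^k$ the problem $(\mathcal{P})$ with $\{\bar a_i\}_{i=1}^k$ has an optimal control. *)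

From HB Require Import structures.
From mathcomp Require Import all_boot all_order all_algebra.
From mathcomp Require Import all_classical all_reals all_analysis.
Set Implicit Arguments. Unset Strict Implicit. Unset Printing Implicit Defensive.
Import Order.TTheory GRing.Theory Num.Theory.
Import numFieldNormedType.Exports.
Local Open Scope classical_set_scope.
Local Open Scope ring_scope.

(* Spectral (eigenfunction-coordinate) model of the controlled heat equation
   with omega = Omega.  All sequences are indexed from 1 (index 0 unused):
   lam i = lambda_i, y0 i = <y0, xi_i>, alpha i = alpha_i, a i = bar a_i. *)

Section HeatSpectral.
Variable R : realType.

Definition admissible (k : nat) (a : nat -> R) (alpha : nat -> R -> R) : Prop :=
  forall i, (1 <= i <= k)%N ->
    measurable_fun [set s : R | 0 <= s] (alpha i) /\
    (forall s : R, 0 <= s -> `|alpha i s| <= a i).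

(* i-th coordinate <y(t; u, y0), xi_i> of the (mild) solution, with
   u = sum_{i<=k} alpha_i xi_i and chi_omega = 1 (omega = Omega):
   y_i(t) = e^{-lam_i t} y0_i + int_0^t e^{-lam_i (t-s)} u_i(s) ds. *)
Definition sol (lam : nat -> R) (k : nat) (y0 : nat -> R)
    (alpha : nat -> R -> R) (t : R) (i : nat) : R :=
  expR (- (lam i * t)) * y0 i +
  (if (1 <= i <= k)%N then
     Rintegral lebesgue_measure `[0, t] (fun s => expR (- (lam i * (t - s))) * alpha i s)
   else 0).

(* membership in S_m = closed span{xi_{m+1}, xi_{m+2}, ...} *)
Definition in_Sm (m : nat) (y : nat -> R) : Prop :=
  forall i, (1 <= i <= m)%N -> y i = 0.

Definition reaches lam k m a y0 (t : R) : Prop :=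
  0 <= t /\ exists alpha, admissible k a alpha /\ in_Sm m (sol lam k y0 alpha t).

Definition has_optimal_control lam k m a y0 : Prop :=
  exists (tstar : R) (alpha : nat -> R -> R),
    0 <= tstar /\ admissible k a alpha /\ in_Sm m (sol lam k y0 alpha tstar) /\
    (forall t, reaches lam k m a y0 t -> tstar <= t).

Definition problem_has_optimal_controls lam k m y0 : Prop :=
  forall a : nat -> R, (forall i, (1 <= i <= k)%N -> 0 < a i) ->
    has_optimal_control lam k m a y0.

Definition dirichlet_spectrum (lam : nat -> R) : Prop :=
  0 < lam 1%N /\ lam 1%N < lam 2%N /\
  (forall i, (2 <= i)%N -> lam i <= lam i.+1) /\
  lam @ \oo --> +oo.

(* coordinates of an element of L^2(Omega) in the orthonormal basis: l^2 *)
Definition square_summable (y : nat -> R) : Prop :=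
  cvgn (series (fun i => y i ^+ 2)).

End HeatSpectral.

From HB Require Import structures.
From mathcomp Require Import all_boot all_order all_algebra.
From mathcomp Require Import all_classical all_reals all_analysis.
From mathcomp Require Import ring zify.
Import Order.TTheory GRing.Theory Num.Theory.
Import numFieldNormedType.Exports.
Local Open Scope classical_set_scope.
Local Open Scope ring_scope.

(* Since omega = Omega and the control acts on the first k modes, the modes
   decouple.  A mode i with k < i <= m is uncontrolled and evolves as
   e^{-lam_i t} y0_i, so S_m is never reached if such a y0_i is nonzero.
   Otherwise only the modes i <= min(k, m) must be driven to 0.  Mode i can be
   brought to 0 at time t with |u_i| <= a_i iff lam_i |y0_i| <= a_i (e^{lam_i t} - 1),
   i.e. iff t >= tau_i := ln (1 + lam_i |y0_i| / a_i) / lam_i, and a suitable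
   constant control then does it.  Hence the minimal time is max_i tau_i, which is
   attained, and positive because y0 is not in S_m. *)


Section ExponentialKernel.
Context {R : realType}.
Implicit Types l t c a x : R.

Lemma is_derive_expR_kernel l t x :
  is_derive x 1 (fun s : R => expR (- (l * (t - s)))) (expR (- (l * (t - x))) * l).
Proof.
have : is_derive x 1 (fun s : R => - (l * (t - s))) l.
  by apply: is_derive_eq; rewrite add0r mul1r scalerN opprK scaler1.
exact: is_derive1_comp.
Qed.

Lemma continuous_expR_kernel l t : continuous (fun s : R => expR (- (l * (t - s)))).
Proof.
move=> x; have [+ _] := is_derive_expR_kernel l t x.
by move/derivable1_diffP/differentiable_continuous.
Qed.

Lemma continuous_expR_kernelM l t c :
  continuous (fun s : R => expR (- (l * (t - s))) * c).
Proof.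
move=> x; apply: (@continuousM R R (fun s : R => expR (- (l * (t - s)))) (fun _ => c)).
  exact: continuous_expR_kernel.
exact: cst_continuous.
Qed.

Lemma is_derive_expR_kernel_primitive l t c x : l != 0 ->
  is_derive x 1 (fun s : R => c / l * expR (- (l * (t - s))))
    (expR (- (l * (t - x))) * c).
Proof.
move=> l0; have := is_deriveZ (c / l) (is_derive_expR_kernel l t x).
by move=> ?; apply: is_derive_eq; rewrite /= [LHS]/GRing.scale /=; field.
Qed.

Lemma Rintegral_expR_kernel l t c : 0 < l -> 0 <= t ->
  Rintegral lebesgue_measure `[0, t] (fun s => expR (- (l * (t - s))) * c)
  = c * (1 - expR (- (l * t))) / l.
Proof.
move=> l0 t0; have l0' : l != 0 by rewrite gt_eqF.
move: t0; rewrite le_eqVlt => /predU1P[<-|t0].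
  by rewrite set_itv1 Rintegral_set1 mulr0 oppr0 expR0 subrr mulr0 mul0r.
have F'E x := is_derive_expR_kernel_primitive l t c x l0'.
have cF : continuous (fun s : R => c / l * expR (- (l * (t - s)))).
  by move=> x; have [+ _] := F'E x; move/derivable1_diffP/differentiable_continuous.
rewrite /Rintegral (@continuous_FTC2 R _
  (fun s : R => c / l * expR (- (l * (t - s)))) 0 t t0).
- by rewrite /= subrr mulr0 oppr0 expR0 addr0 -mulrBr mulrAC.
- exact/continuous_subspaceT/continuous_expR_kernelM.
- split; first by move=> x _; case: (F'E x).
  + exact/cvg_at_right_filter/cF.
  + exact/cvg_at_left_filter/cF.
- by move=> x _; rewrite derive1E derive_val.
Qed.

Lemma expR_kernel_le1 l t x : 0 <= l -> x <= t -> expR (- (l * (t - x))) <= 1.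
Proof.
by move=> l0 xt; rewrite -expR0 ler_expR oppr_le0 mulr_ge0 // subr_ge0.
Qed.

Lemma integrable_expR_kernelM l t a (u : R -> R) : 0 <= l ->
  measurable_fun [set s : R | 0 <= s] u -> (forall s, 0 <= s -> `|u s| <= a) ->
  lebesgue_measure.-integrable `[0, t] (EFin \o (fun s => expR (- (l * (t - s))) * u s)).
Proof.
move=> l0 mu bu.
have sub : `[0, t] `<=` [set s : R | 0 <= s].
  by move=> x /=; rewrite in_itv /= => /andP[].
have mpos : measurable [set s : R | 0 <= s].
  rewrite (_ : [set s : R | 0 <= s] = `[0, +oo[%classic) //.
  by apply/seteqP; split => x /=; rewrite in_itv /= andbT.
apply: measurable_bounded_integrable => //.
- have := lebesgue_measure_itv `[0, t]%R; rewrite /= => ->.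
  by case: ifP => // _; rewrite -EFinD ltry.
- apply: measurable_realfun.measurable_funM; last exact: measurable_funS mu.
  apply: measurable_funTS.
  exact: measurable_realfun.continuous_measurable_fun (continuous_expR_kernel l t).
exists a; split; first exact: num_real.
move=> M /ltW aM x; rewrite /= in_itv /= => /andP[x0 xt].
apply: le_trans aM.
rewrite normrM ger0_norm ?expR_ge0 // -[a]mul1r.
by apply: ler_pM; rewrite ?expR_ge0 ?expR_kernel_le1 ?bu.
Qed.

Lemma norm_Rintegral_expR_kernelM_le l t a (u : R -> R) : 0 < l -> 0 <= t ->
  measurable_fun [set s : R | 0 <= s] u -> (forall s, 0 <= s -> `|u s| <= a) ->
  `|Rintegral lebesgue_measure `[0, t] (fun s => expR (- (l * (t - s))) * u s)|
    <= a * (1 - expR (- (l * t))) / l.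
Proof.
move=> l0 t0 mu bu.
have intf := integrable_expR_kernelM l t a u (ltW l0) mu bu.
apply: le_trans (le_normr_Rintegral _ intf) _ => //.
rewrite -(Rintegral_expR_kernel l t a l0 t0).
apply: le_Rintegral => //.
- exact: integrable_norm intf.
- apply: continuous_compact_integrable; first exact: segment_compact.
  exact/continuous_subspaceT/continuous_expR_kernelM.
move=> x; rewrite /= in_itv /= => /andP[x0 _].
by rewrite normrM ger0_norm ?expR_ge0 // ler_pM2l ?expR_gt0 // bu.
Qed.

End ExponentialKernel.

Section ScalarMinimalTime.
Context {R : realType}.
Variables (l a : R).
Hypotheses (l_gt0 : 0 < l) (a_gt0 : 0 < a).
Let l_ge0 : 0 <= l := ltW l_gt0.
Let a_ge0 : 0 <= a := ltW a_gt0.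

Definition min_time (y : R) : R := ln (1 + l * `|y| / a) / l.

Lemma min_time_le (y t : R) :
  (min_time y <= t) = (l * `|y| <= a * (expR (l * t) - 1)).
Proof.
have b_gt0 : 0 < 1 + l * `|y| / a.
  by rewrite (lt_le_trans ltr01) // lerDl divr_ge0 ?mulr_ge0.
rewrite /min_time ler_pdivrMr // [t * l]mulrC -[X in X = _]ler_expR lnK ?posrE //.
by rewrite -lerBrDl ler_pdivrMr // [_ * a]mulrC.
Qed.

Lemma min_time_gt0 (y : R) : y != 0 -> 0 < min_time y.
Proof.
move=> y0; rewrite /min_time divr_gt0 // ln_gt0 // ltrDl.
by rewrite divr_gt0 // mulr_gt0 // normr_gt0.
Qed.

Lemma min_time_le_of_null (y t : R) (u : R -> R) : 0 <= t ->
  measurable_fun [set s : R | 0 <= s] u -> (forall s, 0 <= s -> `|u s| <= a) ->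
  expR (- (l * t)) * y +
    Rintegral lebesgue_measure `[0, t] (fun s => expR (- (l * (t - s))) * u s) = 0 ->
  min_time y <= t.
Proof.
move=> t0 mu bu /eqP; rewrite addr_eq0 => /eqP yE.
have := norm_Rintegral_expR_kernelM_le l t a u l_gt0 t0 mu bu.
rewrite -normrN -yE normrM ger0_norm ?expR_ge0 // expRN min_time_le.
have E_gt0 : 0 < expR (l * t) by rewrite expR_gt0.
rewrite -(ler_pM2l (mulr_gt0 l_gt0 E_gt0)).
by congr (_ <= _); field; rewrite !gt_eqF.
Qed.

Definition steer_const (y T : R) : R := - (l * y) / (expR (l * T) - 1).

Section SteeringTime.
Variables (T : R).
Hypothesis T_gt0 : 0 < T.

Let E_gt1 : 1 < expR (l * T).
Proof. by rewrite -expR0 ltr_expR mulr_gt0. Qed.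

Lemma steer_const_null (y : R) :
  expR (- (l * T)) * y +
    Rintegral lebesgue_measure `[0, T] (fun s => expR (- (l * (T - s))) * steer_const y T)
  = 0.
Proof.
rewrite Rintegral_expR_kernel ?ltW // /steer_const expRN.
have E_gt0 : 0 < expR (l * T) by rewrite expR_gt0.
have E1_gt0 : 0 < expR (l * T) - 1 by rewrite subr_gt0.
by field; rewrite !gt_eqF.
Qed.

Lemma norm_steer_const_le (y : R) : min_time y <= T -> `|steer_const y T| <= a.
Proof.
have E1_gt0 : 0 < expR (l * T) - 1 by rewrite subr_gt0.
rewrite min_time_le /steer_const normrM normrN normrM normfV.
by rewrite (gtr0_norm l_gt0) (gtr0_norm E1_gt0) ler_pdivrMr.
Qed.

End SteeringTime.
End ScalarMinimalTime.

Lemma exists_argmax_nat {d : Order.disp_t} {T : orderType d} (f : nat -> T)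
    (K i0 : nat) :
  (1 <= i0 <= K)%N ->
  exists2 j, (1 <= j <= K)%N & forall i, (1 <= i <= K)%N -> (f i <= f j)%O.
Proof.
elim: K i0 => [|K IH] i0 hi0; first lia.
have [K0|K_gt0] := posnP K.
  by exists 1%N; [lia | move=> i hi; have -> : i = 1%N by lia].
have [j hj fj] := IH 1%N ltac:(lia).
have [fK|fK] := leP (f K.+1) (f j).
  exists j; first lia.
  move=> i hi; have [iK|->] : (1 <= i <= K)%N \/ i = K.+1 by lia.
  - exact: fj.
  - exact: fK.
exists K.+1; first lia.
move=> i hi; have [iK|->] : (1 <= i <= K)%N \/ i = K.+1 by lia.
- exact: le_trans (fj i iK) (ltW fK).
- exact: lexx.
Qed.

Section HeatOptimalTime.
Context {R : realType}.
Variables (lam : nat -> R) (k m : nat) (y0 : nat -> R).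

Lemma dirichlet_spectrum_gt0 :
  dirichlet_spectrum lam -> forall i, (1 <= i)%N -> 0 < lam i.
Proof.
move=> [l1 [l12 [lmon _]]].
have l2n n : lam 2%N <= lam n.+2.
  by elim: n => [//|n IH]; apply: le_trans IH (lmon _ _).
by case=> [//|[//|n]] _; apply: lt_le_trans (l2n n); exact: lt_trans l12.
Qed.

Lemma sol_uncontrolled alpha t i : ~~ (1 <= i <= k)%N ->
  sol lam k y0 alpha t i = expR (- (lam i * t)) * y0 i.
Proof. by move=> /negbTE ik; rewrite /sol ik addr0. Qed.

Lemma not_reaches_of_uncontrolled_mode a t i : (k < i <= m)%N -> y0 i != 0 ->
  ~ reaches lam k m a y0 t.
Proof.
move=> ikm yi [_ [alpha [_ hS]]]; have /eqP := hS i ltac:(lia).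
rewrite sol_uncontrolled; last lia.
by rewrite mulf_eq0 gt_eqF ?expR_gt0 //= (negbTE yi).
Qed.

Section Controlled.
Variable a : nat -> R.
Hypotheses (lam_gt0 : forall i, (1 <= i)%N -> 0 < lam i)
  (a_gt0 : forall i, (1 <= i <= k)%N -> 0 < a i).

Let tau i := min_time (lam i) (a i) (y0 i).

Lemma min_time_le_reaches t i : (1 <= i <= minn k m)%N ->
  reaches lam k m a y0 t -> tau i <= t.
Proof.
move=> hi [t0 [alpha [adm hS]]].
have ik : (1 <= i <= k)%N by lia.
have [malpha balpha] := adm i ik.
apply: (min_time_le_of_null (lam i) (a i) (lam_gt0 i ltac:(lia)) (a_gt0 i ik)
  _ _ _ t0 malpha balpha).
by have := hS i ltac:(lia); rewrite /sol ik.
Qed.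

Lemma reaches_steer_const T : 0 < T ->
  (forall i, (1 <= i <= minn k m)%N -> tau i <= T) ->
  (forall j, (k < j <= m)%N -> y0 j = 0) ->
  exists2 alpha, admissible k a alpha & in_Sm m (sol lam k y0 alpha T).
Proof.
move=> T_gt0 tauT y0_free.
(* Modes i > m need not vanish; they get no control, as tau_i <= T may fail. *)
exists (fun i _ => if (i <= m)%N then steer_const (lam i) (y0 i) T else 0).
  move=> i ik; split; first by case: ifP => _; exact: measurable_cst.
  move=> s _; case: ifP => im; last by rewrite normr0 ltW ?a_gt0.
  exact: (norm_steer_const_le (lam i) (a i) (lam_gt0 i ltac:(lia)) (a_gt0 i ik)
    T T_gt0 _ (tauT i ltac:(lia))).
move=> i im; have [ik|ik] := boolP (1 <= i <= k)%N.
  rewrite /sol ik (_ : (i <= m)%N = true); last lia.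
  exact: (steer_const_null (lam i) (lam_gt0 i ltac:(lia)) T T_gt0).
by rewrite sol_uncontrolled // y0_free ?mulr0 //; lia.
Qed.

End Controlled.

Lemma optimal_controls_of_uncontrolled_modes_null :
  dirichlet_spectrum lam -> ~ in_Sm m y0 ->
  (forall j, (k < j <= m)%N -> y0 j = 0) -> problem_has_optimal_controls lam k m y0.
Proof.
move=> /dirichlet_spectrum_gt0 lam_gt0 nS y0_free a a_gt0.
pose tau i := min_time (lam i) (a i) (y0 i).
have [i0 i0m yi0] : exists2 i, (1 <= i <= m)%N & y0 i != 0.
  apply: contrapT => none; apply: nS => i im; apply/eqP.
  by apply: contrapT => /negP yi; apply: none; exists i.
have i0k : (1 <= i0 <= minn k m)%N.
  suff : (i0 <= k)%N by lia.
  by apply: contraNT yi0; rewrite -ltnNge => ?; apply/eqP/y0_free; lia.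
have [j jkm tau_max] := exists_argmax_nat tau (minn k m) i0 i0k.
have tau_pos : 0 < tau j.
  apply: lt_le_trans (tau_max _ i0k).
  exact: (min_time_gt0 (lam i0) (a i0) (lam_gt0 i0 ltac:(lia)) (a_gt0 i0 ltac:(lia))
    _ yi0).
have [alpha adm hS] :=
  reaches_steer_const a lam_gt0 a_gt0 (tau j) tau_pos tau_max y0_free.
exists (tau j), alpha; split; first exact: ltW.
do 2![split => //] => t.
exact: (min_time_le_reaches a lam_gt0 a_gt0 t j jkm).
Qed.

End HeatOptimalTime.

Theorem theorem2p1 (R : realType) (lam : nat -> R) (m k : nat) (y0 : nat -> R) :
  dirichlet_spectrum lam ->
  (2 <= m)%N -> (1 <= k)%N ->
  square_summable y0 ->
  ~ in_Sm m y0 ->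
  (~ problem_has_optimal_controls lam k m y0 <->
   ((k < m)%N /\ exists i : nat, (k + 1 <= i <= m)%N /\ y0 i <> 0)).
Proof.
move=> spectrum _ _ _ nS; split=> [no_opt | [_ [i [ikm yi]]] has_opt].
  apply: contrapT => blocked.
  apply/no_opt/optimal_controls_of_uncontrolled_modes_null => //.
  move=> j jkm; apply: contrapT => yj; apply: blocked; split; first lia.
  by exists j; split; [lia | exact: yj].
have [tstar [alpha [t0 [adm [hS _]]]]] := has_opt (fun=> 1) (fun _ _ => ltr01).
have ikm' : (k < i <= m)%N by lia.
apply: (not_reaches_of_uncontrolled_mode lam k m y0 (fun=> 1) tstar i ikm').
  exact/eqP.
by split=> //; exists alpha.
Qed.
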